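(* If $N$ is a normal form, i.e. $N$ is generated by the grammar $N ::= xN_1\cdots N_k \mid \lambda x.N \mid \mu\alpha.[\beta]N$ ($k\ge0$), then there exist a basis $\Gamma$, a name context $\Delta$ and $\kappa\in\mathcal{T}_C$ such that $\Gamma\vdash N:\kappa\to\nu\mid\Delta$ is derivable in the intersection type system.
   Context: $\lambda\mu$-terms: $M,N ::= x \mid \lambda x.M \mid MN \mid \mu\alpha.[\beta]M$ over disjoint denumerable sets of term variables and names ($\lambda$ binds $x$, $\mu$ binds $\alpha$; bound and free variables/names assumed distinct). Types: with constant $\nu$ and symbol $\omega$ (not itself a type), $\mathcal{T}_D:\ \delta ::= \nu \mid \omega\to\nu \mid \kappa\to\nu \mid \delta\wedge\delta$; $\mathcal{T}_C:\ \kappa ::= \delta\times\omega \mid \delta\times\kappa \mid \kappa\wedge\kappa$ ($\times$ right-associative). $\le$ is the least preorder on $\mathcal{T}_D$ and on $\mathcal{T}_C$ such that: $\sigma\wedge\tau\le\sigma$; $\sigma\wedge\tau\le\tau$; $\nu\le\omega\to\nu$; $\omega\to\nu\le\nu$; $\delta_1\times\delta_2\times\omega\le\delta_1\times\omega$; $(\delta_1\times\omega)\wedge(\delta_2\times\kappa)\le(\delta_1\wedge\delta_2)\times\kappa$; $(\delta_1\times\kappa_1)\wedge(\delta_2\times\kappa_2)\le(\delta_1\wedge\delta_2)\times(\kappa_1\wedge\kappa_2)$; $\delta_1\le\delta_2\Rightarrow\delta_1\times\omega\le\delta_2\times\omega$; $\delta_1\le\delta_2,\kappa_1\le\kappa_2\Rightarrow\delta_1\times\kappa_1\le\delta_2\times\kappa_2$;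 $\sigma\le\tau_1,\sigma\le\tau_2\Rightarrow\sigma\le\tau_1\wedge\tau_2$; $\kappa_2\le\kappa_1\Rightarrow\kappa_1\to\nu\le\kappa_2\to\nu$. Typing: bases $\Gamma$ (finite maps variables $\to\mathcal{T}_D$), name contexts $\Delta$ (finite maps names $\to\mathcal{T}_C$); judgements $\Gamma\vdash M:\delta\mid\Delta$, with variables of $\Gamma$ and names of $\Delta$ not bound in $M$. Rules: (ax) $\Gamma,x{:}\delta\vdash x:\delta\mid\Delta$; (abs) from $\Gamma,x{:}\delta\vdash M:\kappa\to\nu\mid\Delta$ infer $\Gamma\vdash\lambda x.M:\delta\times\kappa\to\nu\mid\Delta$; (app) from $\Gamma\vdash M:\delta\times\kappa\to\nu\mid\Delta$ and $\Gamma\vdash N:\delta\mid\Delta$ infer $\Gamma\vdash MN:\kappa\to\nu\mid\Delta$ ($\kappa\in\mathcal{T}_C$ or $\kappa=\omega$); ($\mu$) from $\Gamma\vdash M:\kappa'\to\nu\mid\alpha{:}\kappa,\beta{:}\kappa',\Delta$ infer $\Gamma\vdash\mu\alpha.[\beta]M:\kappa\to\nu\mid\beta{:}\kappa',\Delta$ ($\beta\neq\alpha$), and from $\Gamma\vdash M:\kappa\to\nu\mid\alpha{:}\kappa,\Delta$ infer $\Gamma\vdash\mu\alpha.[\alpha]M:\kappa\to\nu\mid\Delta$; ($\le$) from $\Gamma\vdash M:\delta\mid\Delta$, $\delta\le\delta'$ infer $\Gamma\vdash M:\delta'\mid\Delta$; ($\wedge$) from $\Gamma\vdash M:\delta\mid\Delta$,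 $\Gamma\vdash M:\delta'\mid\Delta$ infer $\Gamma\vdash M:\delta\wedge\delta'\mid\Delta$. *)

From Stdlib Require Import List Arith.
Import ListNotations.

(* Term variables and names are both represented by nat (disjoint sorts by
   construction: they live in different positions of the syntax). *)
Inductive term : Type :=
| Var : nat -> term
| Lam : nat -> term -> term
| App : term -> term -> term
| Mu  : nat -> nat -> term -> term.   (* Mu a b M  =  mu a.[b]M *)

Inductive dtype : Type :=
| Nu    : dtype
| OArr  : dtype                       (* omega -> nu *)
| CArr  : ctype -> dtype
| DAnd  : dtype -> dtype -> dtype
with ctype : Type :=
| TOm   : dtype -> ctype              (* delta x omega *)
| TC    : dtype -> ctype -> ctype     (* delta x kappa *)
| CAnd  : ctype -> ctype -> ctype.

(* "kappa -> nu" and "delta x kappa" where kappa ranges over T_C or omega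
   (None = omega). *)
Definition arr (k : option ctype) : dtype :=
  match k with None => OArr | Some k => CArr k end.
Definition times (d : dtype) (k : option ctype) : ctype :=
  match k with None => TOm d | Some k => TC d k end.

Inductive leD : dtype -> dtype -> Prop :=
| leD_refl : forall d, leD d d
| leD_trans : forall d1 d2 d3, leD d1 d2 -> leD d2 d3 -> leD d1 d3
| leD_andl : forall s t, leD (DAnd s t) s
| leD_andr : forall s t, leD (DAnd s t) t
| leD_nu_om : leD Nu OArr
| leD_om_nu : leD OArr Nu
| leD_glb : forall s t1 t2, leD s t1 -> leD s t2 -> leD s (DAnd t1 t2)
| leD_arr : forall k1 k2, leC k2 k1 -> leD (CArr k1) (CArr k2)
with leC : ctype -> ctype -> Prop :=
| leC_refl : forall k, leC k k
| leC_trans : forall k1 k2 k3, leC k1 k2 -> leC k2 k3 -> leC k1 k3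
| leC_andl : forall s t, leC (CAnd s t) s
| leC_andr : forall s t, leC (CAnd s t) t
| leC_drop : forall d1 d2, leC (TC d1 (TOm d2)) (TOm d1)
| leC_and_om : forall d1 d2 k,
    leC (CAnd (TOm d1) (TC d2 k)) (TC (DAnd d1 d2) k)
| leC_and_tc : forall d1 d2 k1 k2,
    leC (CAnd (TC d1 k1) (TC d2 k2)) (TC (DAnd d1 d2) (CAnd k1 k2))
| leC_mon_om : forall d1 d2, leD d1 d2 -> leC (TOm d1) (TOm d2)
| leC_mon_tc : forall d1 d2 k1 k2, leD d1 d2 -> leC k1 k2 -> leC (TC d1 k1) (TC d2 k2)
| leC_glb : forall s t1 t2, leC s t1 -> leC s t2 -> leC s (CAnd t1 t2).

(* Bases and name contexts as partial maps (finiteness imposed where needed). *)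
Definition basis := nat -> option dtype.
Definition nctx := nat -> option ctype.

Definition upd {A} (f : nat -> option A) (x : nat) (a : A) : nat -> option A :=
  fun y => if Nat.eqb y x then Some a else f y.

Definition finite_dom {A} (f : nat -> option A) : Prop :=
  exists n, forall x, n <= x -> f x = None.

Inductive typing : basis -> term -> dtype -> nctx -> Prop :=
| T_ax : forall G D x d, G x = Some d -> typing G (Var x) d D
| T_abs : forall G D x d M k,
    G x = None ->
    typing (upd G x d) M (arr k) D ->
    typing G (Lam x M) (CArr (times d k)) D
| T_app : forall G D M N d k,
    typing G M (CArr (times d k)) D ->
    typing G N d D ->
    typing G (App M N) (arr k) D
| T_mu1 : forall G D M a b k k',
    a <> b -> D a = None -> D b = Some k' ->
    typing G M (CArr k') (upd D a k) ->
    typing G (Mu a b M) (CArr k) D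
| T_mu2 : forall G D M a k,
    D a = None ->
    typing G M (CArr k) (upd D a k) ->
    typing G (Mu a a M) (CArr k) D
| T_le : forall G D M d d', typing G M d D -> leD d d' -> typing G M d' D
| T_and : forall G D M d d', typing G M d D -> typing G M d' D ->
    typing G M (DAnd d d') D.

Inductive neutral : term -> Prop :=
| ne_var : forall x, neutral (Var x)
| ne_app : forall M N, neutral M -> nf N -> neutral (App M N)
with nf : term -> Prop :=
| nf_ne : forall M, neutral M -> nf M
| nf_lam : forall x M, nf M -> nf (Lam x M)
| nf_mu : forall a b M, nf M -> nf (Mu a b M).

Fixpoint fv (M : term) : list nat :=
  match M with
  | Var x => [x]
  | Lam x M => remove Nat.eq_dec x (fv M)
  | App M N => fv M ++ fv N
  | Mu _ _ M => fv M
  end.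
Fixpoint fn (M : term) : list nat :=
  match M with
  | Var _ => []
  | Lam _ M => fn M
  | App M N => fn M ++ fn N
  | Mu a b M => remove Nat.eq_dec a (b :: fn M)
  end.
Fixpoint bv (M : term) : list nat :=
  match M with
  | Var _ => []
  | Lam x M => x :: bv M
  | App M N => bv M ++ bv N
  | Mu _ _ M => bv M
  end.
Fixpoint bn (M : term) : list nat :=
  match M with
  | Var _ => []
  | Lam _ M => bn M
  | App M N => bn M ++ bn N
  | Mu a _ M => a :: bn M
  end.

(* Variable convention: no binder binds a variable/name that is free in the
   term or already in scope (bound and free variables/names distinct). *)
Fixpoint conv (sx sa : list nat) (M : term) : Prop :=
  match M with
  | Var _ => True
  | Lam x M => ~ In x sx /\ conv (x :: sx) sa M
  | App M N => conv sx sa M /\ conv sx sa N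
  | Mu a _ M => ~ In a sa /\ conv sx (a :: sa) M
  end.
Definition var_convention (M : term) : Prop := conv (fv M) (fn M) M.

(* Every normal form is typable because typability can be demanded bottom-up.
   To each subterm we attach requirements, a basis and a name context on its
   free variables and names, such that any basis and context assigning smaller
   types to them types the subterm.  A neutral term x N1 ... Nk meets every
   target kappa -> nu (or omega -> nu): type the arguments by induction and
   require of the head x the arrow through their types, intersecting with the
   requirements of the arguments.  An abstraction takes its domain from the
   requirement on its bound variable; mu a.[b] intersects the body's type into
   the requirement on b and takes its own type from the one on a.  Smaller
   types suffice thanks to subsumption, with arrows contravariant. *)

From Stdlib Require Import List Arith Lia.

Definition rm {A} (f : nat -> option A) (x : nat) : nat -> option A :=
  fun y => if Nat.eqb y x then None else f y.

Definition supported {A} (f : nat -> option A) (l : list nat) : Prop :=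
  forall x t, f x = Some t -> In x l.

Definition avoids {A} (f : nat -> option A) (l : list nat) : Prop :=
  forall x, In x l -> f x = None.

Lemma upd_eq {A} (f : nat -> option A) x t : upd f x t x = Some t.
Proof. unfold upd. now rewrite Nat.eqb_refl. Qed.

Lemma upd_neq {A} (f : nat -> option A) x y t : y <> x -> upd f x t y = f y.
Proof. intro Hyx. unfold upd. now destruct (Nat.eqb_spec y x). Qed.

Lemma rm_eq {A} (f : nat -> option A) x : rm f x x = None.
Proof. unfold rm. now rewrite Nat.eqb_refl. Qed.

Lemma rm_neq {A} (f : nat -> option A) x y : y <> x -> rm f x y = f y.
Proof. intro Hyx. unfold rm. now destruct (Nat.eqb_spec y x). Qed.

Section Support.

Context {A : Type}.
Implicit Types (f : nat -> option A) (l : list nat).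

Lemma supported_incl f l l' : supported f l -> incl l l' -> supported f l'.
Proof. intros Hf Hl x t Hx. exact (Hl x (Hf x t Hx)). Qed.

Lemma supported_rm f l x : supported f l -> supported (rm f x) (remove Nat.eq_dec x l).
Proof.
  intros Hf y t Hy. destruct (Nat.eq_dec y x) as [->|Hyx].
  - now rewrite rm_eq in Hy.
  - rewrite rm_neq in Hy by exact Hyx. exact (in_in_remove _ _ Hyx (Hf y t Hy)).
Qed.

Lemma supported_upd f l x t : supported f l -> In x l -> supported (upd f x t) l.
Proof.
  intros Hf Hx y u Hy. destruct (Nat.eq_dec y x) as [->|Hyx]; [exact Hx|].
  rewrite upd_neq in Hy by exact Hyx. exact (Hf y u Hy).
Qed.

Lemma supported_avoids f l l' :
  supported f l -> (forall x, In x l' -> ~ In x l) -> avoids f l'.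
Proof.
  intros Hf Hdis x Hx. destruct (f x) as [t|] eqn:E; [|reflexivity].
  exfalso. exact (Hdis x Hx (Hf x t E)).
Qed.

Lemma supported_finite_dom f l : supported f l -> finite_dom f.
Proof.
  intro Hf. exists (S (list_max l)). intros x Hx.
  destruct (f x) as [t|] eqn:E; [exfalso|reflexivity].
  assert (Hmax : Forall (fun y => y <= list_max l) l) by (apply list_max_le; lia).
  rewrite Forall_forall in Hmax. specialize (Hmax x (Hf x t E)). lia.
Qed.

End Support.

Section Refinement.

Context {A : Type} (le : A -> A -> Prop) (meet : A -> A -> A).
Hypothesis le_refl : forall a, le a a.
Hypothesis le_trans : forall a b c, le a b -> le b c -> le a c.
Hypothesis le_meet_l : forall a b, le (meet a b) a.
Hypothesis le_meet_r : forall a b, le (meet a b) b.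

Definition refines (f r : nat -> option A) : Prop :=
  forall x t, r x = Some t -> exists t', f x = Some t' /\ le t' t.

Definition merge (r1 r2 : nat -> option A) : nat -> option A :=
  fun x => match r1 x, r2 x with
           | Some a, Some b => Some (meet a b)
           | Some a, None => Some a
           | None, o => o
           end.

Definition meet_opt (o : option A) (b : A) : A :=
  match o with Some a => meet a b | None => b end.

Lemma refines_refl f : refines f f.
Proof. intros x t Hx. exists t. auto. Qed.

Lemma refines_merge_l f r1 r2 : refines f (merge r1 r2) -> refines f r1.
Proof.
  intros Hf x t Hx. specialize (Hf x). unfold merge in Hf. rewrite Hx in Hf.
  destruct (r2 x) as [u|].
  - destruct (Hf _ eq_refl) as (t' & Ht' & Hle). eauto.
  - exact (Hf t eq_refl).
Qed.

Lemma refines_merge_r f r1 r2 : refines f (merge r1 r2) -> refines f r2.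
Proof.
  intros Hf x t Hx. specialize (Hf x). unfold merge in Hf. rewrite Hx in Hf.
  destruct (r1 x) as [u|].
  - destruct (Hf _ eq_refl) as (t' & Ht' & Hle). eauto.
  - exact (Hf t eq_refl).
Qed.

Lemma supported_merge r1 r2 l1 l2 :
  supported r1 l1 -> supported r2 l2 -> supported (merge r1 r2) (l1 ++ l2).
Proof.
  intros H1 H2 x t Hx. apply in_or_app. unfold merge in Hx.
  destruct (r1 x) as [a|] eqn:E1; [left; exact (H1 x a E1)|right; exact (H2 x t Hx)].
Qed.

Lemma le_meet_opt_r o b : le (meet_opt o b) b.
Proof. destruct o; simpl; auto. Qed.

Lemma le_meet_opt_l o a b : o = Some a -> le (meet_opt o b) a.
Proof. intros ->. apply le_meet_l. Qed.

Lemma refines_upd f r x t :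
  refines f (rm r x) -> (forall a, r x = Some a -> le t a) -> refines (upd f x t) r.
Proof.
  intros Hf Ht y u Hy. destruct (Nat.eq_dec y x) as [->|Hyx].
  - rewrite upd_eq. eauto.
  - rewrite upd_neq by exact Hyx. apply Hf. now rewrite rm_neq.
Qed.

Lemma refines_upd_weaken f r x t :
  refines f (upd r x t) -> (forall a, r x = Some a -> le t a) -> refines f r.
Proof.
  intros Hf Ht y u Hy. destruct (Nat.eq_dec y x) as [->|Hyx].
  - destruct (Hf x t (upd_eq r x t)) as (t' & Ht' & Hle). eauto.
  - apply Hf. now rewrite upd_neq.
Qed.

End Refinement.

Arguments merge {A} meet r1 r2 x.
Arguments meet_opt {A} meet o b.

Lemma conv_bv_fresh M sx sa y : conv sx sa M -> In y (bv M) -> ~ In y sx.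
Proof.
  revert sx sa. induction M as [x|x M IH|M IH1 N IH2|a b M IH];
    simpl; intros sx sa Hc Hy; try tauto.
  - destruct Hc as [Hx HM]. destruct Hy as [<-|Hy]; [exact Hx|].
    intro Hin. apply (IH _ _ HM Hy). now right.
  - destruct Hc. apply in_app_or in Hy as [Hy|Hy]; eauto.
  - destruct Hc; eauto.
Qed.

Lemma conv_bn_fresh M sx sa a : conv sx sa M -> In a (bn M) -> ~ In a sa.
Proof.
  revert sx sa. induction M as [x|x M IH|M IH1 N IH2|b c M IH];
    simpl; intros sx sa Hc Ha; try tauto.
  - destruct Hc; eauto.
  - destruct Hc. apply in_app_or in Ha as [Ha|Ha]; eauto.
  - destruct Hc as [Hb HM]. destruct Ha as [<-|Ha]; [exact Hb|].
    intro Hin. apply (IH _ _ HM Ha). now right.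
Qed.

Lemma avoids_app {A} (f : nat -> option A) l1 l2 :
  avoids f (l1 ++ l2) -> avoids f l1 /\ avoids f l2.
Proof. intro H. split; intros x Hx; apply H, in_or_app; auto. Qed.

Lemma avoids_upd_fresh {A} (f : nat -> option A) l x t :
  avoids f l -> ~ In x l -> avoids (upd f x t) l.
Proof.
  intros Hf Hx y Hy. rewrite upd_neq by (intros ->; contradiction). exact (Hf y Hy).
Qed.

Definition typable_from (R : basis) (S : nctx) (M : term) (d : dtype) : Prop :=
  forall G D, refines leD G R -> refines leC D S ->
    avoids G (bv M) -> avoids D (bn M) -> typing G M d D.

Definition has_requirements (M : term) (d : dtype) : Prop :=
  exists (R : basis) (S : nctx),
    supported R (fv M) /\ supported S (fn M) /\ typable_from R S M d.

Definition neutral_typable (M : term) : Prop :=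
  forall sx sa, conv sx sa M -> forall k, has_requirements M (arr k).

Definition nf_typable (M : term) : Prop :=
  forall sx sa, conv sx sa M -> exists k, has_requirements M (CArr k).

Notation mergeD := (merge DAnd).
Notation mergeC := (merge CAnd).

Lemma var_neutral_typable x : neutral_typable (Var x).
Proof.
  intros sx sa _ k. exists (upd (fun _ => None) x (arr k)), (fun _ => None).
  split; [|split].
  - apply supported_upd; [intros y t Hy; discriminate|now left].
  - intros a t Ha; discriminate.
  - intros G D HG _ _ _.
    destruct (HG x (arr k) (upd_eq _ x _)) as (d & Hx & Hle).
    exact (T_le _ _ _ _ _ (T_ax _ _ _ _ Hx) Hle).
Qed.

Lemma app_neutral_typable M N :
  neutral_typable M -> nf_typable N -> neutral_typable (App M N).
Proof.
  intros HM HN sx sa [CM CN] k.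
  destruct (HN sx sa CN) as (kN & R2 & S2 & SR2 & SS2 & T2).
  destruct (HM sx sa CM (Some (times (CArr kN) k))) as (R1 & S1 & SR1 & SS1 & T1).
  exists (mergeD R1 R2), (mergeC S1 S2). split; [|split].
  - now apply supported_merge.
  - now apply supported_merge.
  - intros G D HG HD HbG HbD.
    apply avoids_app in HbG as [HbG1 HbG2]. apply avoids_app in HbD as [HbD1 HbD2].
    apply T_app with (d := CArr kN).
    + apply T1; eauto using refines_merge_l, leD_trans, leD_andl, leC_trans, leC_andl.
    + apply T2; eauto using refines_merge_r, leD_trans, leD_andr, leC_trans, leC_andr.
Qed.

Lemma neutral_nf_typable M : neutral_typable M -> nf_typable M.
Proof. intros H sx sa C. exists (TOm Nu). exact (H sx sa C (Some (TOm Nu))). Qed.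

Lemma lam_nf_typable x M : nf_typable M -> nf_typable (Lam x M).
Proof.
  intros HM sx sa [Cx CM].
  destruct (HM (x :: sx) sa CM) as (k & R & S & SR & SS & T).
  set (d := match R x with Some d => d | None => Nu end).
  exists (times d (Some k)), (rm R x), S. split; [|split].
  - exact (supported_rm _ _ _ SR).
  - exact SS.
  - intros G D HG HD HbG HbD. simpl in HbG.
    apply T_abs; [apply HbG; now left|].
    apply T; [|exact HD| |exact HbD].
    + apply refines_upd; auto using leD_refl.
      intros d' Hd'. unfold d. rewrite Hd'. apply leD_refl.
    + apply avoids_upd_fresh; [intros y Hy; apply HbG; now right|].
      intro Hx. exact (conv_bv_fresh _ _ _ _ CM Hx (or_introl eq_refl)).
Qed.

Lemma mu_self_nf_typable a M : nf_typable M -> nf_typable (Mu a a M).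
Proof.
  intros HM sx sa [Ca CM].
  destruct (HM sx (a :: sa) CM) as (k & R & S & SR & SS & T).
  set (ka := meet_opt CAnd (S a) k).
  exists ka, R, (rm S a). split; [|split].
  - exact SR.
  - apply supported_rm, (supported_incl _ _ _ SS). intros c Hc. now right.
  - intros G D HG HD HbG HbD. simpl in HbD.
    apply T_mu2; [apply HbD; now left|].
    apply T_le with (d := CArr k); [apply T; [exact HG| |exact HbG|]|].
    + apply refines_upd; [exact HD|].
      intros k0 Hk0. exact (le_meet_opt_l _ _ leC_andl _ _ _ Hk0).
    + apply avoids_upd_fresh; [intros c Hc; apply HbD; now right|].
      intro Hc. exact (conv_bn_fresh _ _ _ _ CM Hc (or_introl eq_refl)).
    + apply leD_arr. exact (le_meet_opt_r _ _ leC_refl leC_andr _ _).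
Qed.

Lemma mu_other_nf_typable a b M : a <> b -> nf_typable M -> nf_typable (Mu a b M).
Proof.
  intros Hab HM sx sa [Ca CM].
  destruct (HM sx (a :: sa) CM) as (k & R & S & SR & SS & T).
  set (ka := match S a with Some k0 => k0 | None => TOm Nu end).
  set (kb := meet_opt CAnd (S b) k).
  exists ka, R, (upd (rm S a) b kb). split; [|split].
  - exact SR.
  - apply supported_upd.
    + apply supported_rm, (supported_incl _ _ _ SS). intros c Hc. now right.
    + apply in_in_remove; [congruence|now left].
  - intros G D HG HD HbG HbD. simpl in HbD.
    destruct (HD b kb (upd_eq _ b _)) as (kb' & Hb & Hle).
    apply (T_mu1 G D M a b ka kb'); [exact Hab|apply HbD; now left|exact Hb|].
    apply T_le with (d := CArr k); [apply T; [exact HG| |exact HbG|]|].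
    + apply refines_upd.
      * apply (refines_upd_weaken _ leC_trans _ _ _ _ HD).
        intros k0 Hk0. rewrite rm_neq in Hk0 by congruence.
        exact (le_meet_opt_l _ _ leC_andl _ _ _ Hk0).
      * intros k0 Hk0. unfold ka. rewrite Hk0. apply leC_refl.
    + apply avoids_upd_fresh; [intros c Hc; apply HbD; now right|].
      intro Hc. exact (conv_bn_fresh _ _ _ _ CM Hc (or_introl eq_refl)).
    + apply leD_arr. eapply leC_trans; [exact Hle|].
      exact (le_meet_opt_r _ _ leC_refl leC_andr _ _).
Qed.

Scheme neutral_min := Minimality for neutral Sort Prop
  with nf_min := Minimality for nf Sort Prop.

Lemma nf_nf_typable N : nf N -> nf_typable N.
Proof.
  apply (nf_min neutral_typable nf_typable).
  - exact var_neutral_typable.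
  - intros M N' _ HM _ HN. exact (app_neutral_typable M N' HM HN).
  - intros M _ HM. exact (neutral_nf_typable M HM).
  - intros x M _ HM. exact (lam_nf_typable x M HM).
  - intros a b M _ HM. destruct (Nat.eq_dec a b) as [<-|Hab].
    + exact (mu_self_nf_typable a M HM).
    + exact (mu_other_nf_typable a b M Hab HM).
Qed.

Theorem mainTheorem12 :
  forall N : term, nf N -> var_convention N ->
  exists (G : basis) (D : nctx) (k : ctype),
    finite_dom G /\ finite_dom D /\
    (forall x, In x (bv N) -> G x = None) /\
    (forall a, In a (bn N) -> D a = None) /\
    typing G N (CArr k) D.
Proof.
  intros N HN HC.
  destruct (nf_nf_typable N HN _ _ HC) as (k & R & S & SR & SS & T).
  assert (HbR : avoids R (bv N)).
  { apply (supported_avoids _ _ _ SR). intros x Hx. exact (conv_bv_fresh _ _ _ _ HC Hx). }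
  assert (HbS : avoids S (bn N)).
  { apply (supported_avoids _ _ _ SS). intros a Ha. exact (conv_bn_fresh _ _ _ _ HC Ha). }
  exists R, S, k. repeat split; try assumption.
  - exact (supported_finite_dom _ _ SR).
  - exact (supported_finite_dom _ _ SS).
  - apply T; [apply refines_refl, leD_refl|apply refines_refl, leC_refl|exact HbR|exact HbS].
Qed.
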